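(* Let $X$ be a strong locally super-compact $L$-topological space. Then $({\rm pt}_L\mathcal O(X),{\rm sub}_{\mathcal O(X)})$ is an algebraic $L$-dcpo.
   Context: $L$ is a frame with implication $\to$. $L$-subsets: maps to $L$; nonempty: $\bigvee A=1$; ${\rm sub}_X(A,B)=\bigwedge_xA(x)\to B(x)$. $L$-topology: $\mathcal O(X)\subseteq L^X$ closed under finite meets and arbitrary joins containing all constants $a_X$. Base: $\mathcal B\subseteq\mathcal O(X)$ with $A=\bigvee_{B\in\mathcal B}{\rm sub}_X(B,A)\wedge B$ for each open $A$. Super-compact: nonempty $A$ with ${\rm sub}_X(A,\bigvee_iV_i)=\bigvee_i{\rm sub}_X(A,V_i)$ for all families of open $V_i$. Strong locally super-compact: has a base of super-compact open sets. A point of $\mathcal O(X)$: $p:\mathcal O(X)\to L$ with $p(A\wedge B)=p(A)\wedge p(B)$, $p(\bigvee_iA_i)=\bigvee_ip(A_i)$, $p(\lambda_X)=\lambda$; ${\rm pt}_L\mathcal O(X)$ the set of points, with ${\rm sub}_{\mathcal O(X)}(p,q)=\bigwedge_{A\in\mathcal O(X)}p(A)\to q(A)$. For an $L$-ordered set $(P,e)$: ${\downarrow}y(x)=e(x,y)$; $\sqcup A=x$ iff $e(x,y)={\rm sub}_P(A,{\downarrow}y)$ for all $y$; directed: nonempty with $D(x)\wedge D(y)\le\bigvee_zD(z)\wedge e(x,z)\wedge e(y,z)$; ideal: directed lower set; $L$-dcpo: all directed $L$-subsets have suprema; ${\Downarrow}x(y)=\bigwedge\{e(x,\sqcup I)\to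 I(y):I\text{ ideal with a supremum}\}$; compact: ${\Downarrow}x(x)=1$; $K(P)$ compact elements; $k(x)(y)=e(y,x)$ for $y\in K(P)$, $0$ otherwise; algebraic $L$-dcpo: $L$-dcpo with each $k(x)$ directed and $\sqcup k(x)=x$. *)

From Stdlib Require Import ClassicalEpsilon.

Set Implicit Arguments.
Unset Strict Implicit.

(* A frame is a complete lattice with an implication right adjoint to meet;
   meets then distribute over arbitrary joins. *)
Record frame := Frame {
  car :> Type;
  le : car -> car -> Prop;
  sup : (car -> Prop) -> car;
  inf : (car -> Prop) -> car;
  imp : car -> car -> car;
  le_refl : forall a, le a a;
  le_trans : forall a b c, le a b -> le b c -> le a c;
  le_antisym : forall a b, le a b -> le b a -> a = b;
  sup_ub : forall (S : car -> Prop) a, S a -> le a (sup S);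
  sup_least : forall (S : car -> Prop) b, (forall a, S a -> le a b) -> le (sup S) b;
  inf_lb : forall (S : car -> Prop) a, S a -> le (inf S) a;
  inf_greatest : forall (S : car -> Prop) b, (forall a, S a -> le b a) -> le b (inf S);
  imp_adj : forall a b c,
    le (inf (fun x => x = a \/ x = b)) c <-> le a (imp b c)
}.

Section FrameOps.
Variable L : frame.
Definition meet (a b : L) : L := inf (fun x => x = a \/ x = b).
Definition top : L := inf (fun _ => False).
Definition bot : L := sup (fun _ => False).
Definition Sup {I : Type} (f : I -> L) : L := sup (fun a => exists i, f i = a).
Definition Inf {I : Type} (f : I -> L) : L := inf (fun a => exists i, f i = a).
End FrameOps.

Arguments top {L}.
Arguments bot {L}.

Section LSubsets.
Variables (L : frame) (X : Type).
Definition nonemptyL (A : X -> L) : Prop := Sup A = top.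
Definition subL (A B : X -> L) : L := Inf (fun x => imp (A x) (B x)).
End LSubsets.

Section LTop.
Variables (L : frame) (X : Type).

Record is_Ltopology (O : (X -> L) -> Prop) : Prop := {
  top_meet : forall A B, O A -> O B -> O (fun x => meet (A x) (B x));
  top_join : forall (I : Type) (f : I -> X -> L),
      (forall i, O (f i)) -> O (fun x => Sup (fun i => f i x));
  top_const : forall a : L, O (fun _ => a)
}.

Variable O : (X -> L) -> Prop.

Definition is_base (B : (X -> L) -> Prop) : Prop :=
  (forall U, B U -> O U) /\
  forall A, O A -> forall x,
    A x = Sup (fun U : {U : X -> L | B U} =>
                 meet (subL (proj1_sig U) A) (proj1_sig U x)).

Definition super_compact (A : X -> L) : Prop :=
  nonemptyL A /\
  forall (I : Type) (V : I -> X -> L), (forall i, O (V i)) ->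
    subL A (fun x => Sup (fun i => V i x)) = Sup (fun i => subL A (V i)).

Definition strong_locally_super_compact : Prop :=
  exists B, is_base B /\ forall U, B U -> super_compact U.

Definition Opens := {A : X -> L | O A}.

Record is_point (p : Opens -> L) : Prop := {
  pt_meet : forall A B C : Opens,
      (forall x, proj1_sig C x = meet (proj1_sig A x) (proj1_sig B x)) ->
      p C = meet (p A) (p B);
  pt_join : forall (I : Type) (f : I -> Opens) (C : Opens),
      (forall x, proj1_sig C x = Sup (fun i => proj1_sig (f i) x)) ->
      p C = Sup (fun i => p (f i));
  pt_const : forall (a : L) (C : Opens),
      (forall x, proj1_sig C x = a) -> p C = a
}.

Definition ptL := {p : Opens -> L | is_point p}.

Definition sub_pt (p q : ptL) : L :=
  Inf (fun A : Opens => imp (proj1_sig p A) (proj1_sig q A)).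
End LTop.

Section LOrd.
Variables (L : frame) (P : Type) (e : P -> P -> L).

Record L_ordered : Prop := {
  lo_refl : forall x, e x x = top;
  lo_trans : forall x y z, le (meet (e x y) (e y z)) (e x z);
  lo_antisym : forall x y, e x y = top -> e y x = top -> x = y
}.

Definition down (y : P) : P -> L := fun x => e x y.

Definition is_supL (A : P -> L) (x : P) : Prop :=
  forall y, e x y = subL A (down y).

Definition directed (D : P -> L) : Prop :=
  nonemptyL D /\
  forall x y, le (meet (D x) (D y))
                 (Sup (fun z => meet (D z) (meet (e x z) (e y z)))).

Definition lower_set (D : P -> L) : Prop :=
  forall x y, le (meet (D y) (e x y)) (D x).

Definition ideal (D : P -> L) : Prop := directed D /\ lower_set D.

Definition L_dcpo : Prop :=
  L_ordered /\ forall D, directed D -> exists x, is_supL D x.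

Definition way_below (x : P) (y : P) : L :=
  inf (fun a => exists (I : P -> L) (s : P),
         ideal I /\ is_supL I s /\ a = imp (e x s) (I y)).

Definition compact (x : P) : Prop := way_below x x = top.

Definition kL (x : P) : P -> L := fun y =>
  if excluded_middle_informative (compact y) then e y x else bot.

Definition algebraic_L_dcpo : Prop :=
  L_dcpo /\ forall x, directed (kL x) /\ is_supL (kL x) x.
End LOrd.

(* A super-compact open U induces the point p_U := sub(U, -) of O(X), and
   sub(p_U, q) = q(U) for every point q.  Joins of directed L-subsets D of points
   are computed pointwise, (⊔D)(A) = ⋁_p D(p) ∧ p(A); hence for an ideal I with
   join s, sub(p_U, s) = s(U) = ⋁_p I(p) ∧ sub(p_U, p) ≤ I(p_U), so p_U is compact.
   When the super-compact opens form a base, every point satisfies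
   x(A) = ⋁_U sub(U, A) ∧ x(U), which makes x the join of the ideal
   I_x := ⋁_U x(U) ∧ sub(-, p_U).  For compact y, ⇓y(y) = 1 applied to I_x gives
   sub(y, x) ≤ I_x(y), while k(x)(p_U) = x(U); these two facts transfer
   directedness and the join x from I_x to k(x). *)

From Stdlib Require Import FunctionalExtensionality ProofIrrelevance ClassicalEpsilon.

Section FrameFacts.
Context {L : frame}.
Implicit Types a b c d : L.

Lemma le_meet_l a b : le (meet a b) a.
Proof. apply inf_lb. left; reflexivity. Qed.

Lemma le_meet_r a b : le (meet a b) b.
Proof. apply inf_lb. right; reflexivity. Qed.

Lemma meet_glb a b c : le c a -> le c b -> le c (meet a b).
Proof. intros Ha Hb. apply inf_greatest. intros x [-> | ->]; assumption. Qed.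

Lemma meet_comm_le a b : le (meet a b) (meet b a).
Proof. apply meet_glb; [apply le_meet_r | apply le_meet_l]. Qed.

Lemma meet_mono a b c d : le a c -> le b d -> le (meet a b) (meet c d).
Proof.
  intros Hac Hbd. apply meet_glb.
  - eapply le_trans; [apply le_meet_l | exact Hac].
  - eapply le_trans; [apply le_meet_r | exact Hbd].
Qed.

Lemma le_top a : le a top.
Proof. apply inf_greatest. intros _ []. Qed.

Lemma bot_le a : le bot a.
Proof. apply sup_least. intros _ []. Qed.

Lemma top_le_eq a : le top a -> a = top.
Proof. intros H. apply le_antisym; [apply le_top | exact H]. Qed.

Lemma le_meet_top_l a : le a (meet top a).
Proof. apply meet_glb; [apply le_top | apply le_refl]. Qed.

Lemma le_meet_top_r a : le a (meet a top).
Proof. apply meet_glb; [apply le_refl | apply le_top]. Qed.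

Lemma imp_intro a b c : le (meet c a) b -> le c (imp a b).
Proof. apply imp_adj. Qed.

Lemma imp_elim a b c : le c (imp a b) -> le (meet c a) b.
Proof. apply imp_adj. Qed.

Lemma top_imp_le a b : le top (imp a b) -> le a b.
Proof. intros H. eapply le_trans; [apply le_meet_top_l | apply imp_elim, H]. Qed.

Lemma Sup_ub {I} (f : I -> L) i : le (f i) (Sup f).
Proof. apply sup_ub. exists i; reflexivity. Qed.

Lemma le_Sup {I} (f : I -> L) i a : le a (f i) -> le a (Sup f).
Proof. intros H. eapply le_trans; [exact H | apply Sup_ub]. Qed.

Lemma Sup_least {I} (f : I -> L) b : (forall i, le (f i) b) -> le (Sup f) b.
Proof. intros H. apply sup_least. intros a [i <-]. apply H. Qed.

Lemma Inf_lb {I} (f : I -> L) i : le (Inf f) (f i).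
Proof. apply inf_lb. exists i; reflexivity. Qed.

Lemma Inf_greatest {I} (f : I -> L) b : (forall i, le b (f i)) -> le b (Inf f).
Proof. intros H. apply inf_greatest. intros a [i <-]. apply H. Qed.

Lemma meet_Sup_l_le {I} (f : I -> L) b c :
  (forall i, le (meet (f i) b) c) -> le (meet (Sup f) b) c.
Proof. intros H. apply imp_elim, Sup_least. intros i. apply imp_intro, H. Qed.

Lemma meet_Sup_r_le {I} (f : I -> L) b c :
  (forall i, le (meet b (f i)) c) -> le (meet b (Sup f)) c.
Proof.
  intros H. eapply le_trans; [apply meet_comm_le |]. apply meet_Sup_l_le.
  intros i. eapply le_trans; [apply meet_comm_le | apply H].
Qed.

Lemma subL_mp {X : Type} (A B : X -> L) x : le (meet (subL A B) (A x)) (B x).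
Proof. apply imp_elim, (Inf_lb (fun x => imp (A x) (B x)) x). Qed.

Lemma le_subL {X : Type} (A B : X -> L) c :
  (forall x, le (meet c (A x)) (B x)) -> le c (subL A B).
Proof. intros H. apply Inf_greatest. intros x. apply imp_intro, H. Qed.

Lemma subL_mono {X : Type} (U A B : X -> L) :
  (forall x, le (A x) (B x)) -> le (subL U A) (subL U B).
Proof.
  intros H. apply le_subL. intros x. eapply le_trans; [apply subL_mp | apply H].
Qed.
End FrameFacts.

(* Closes [le m a] when every conjunct of [a] is a conjunct of [m]. *)
Ltac meet_proj :=
  first [ apply le_refl
        | eapply le_trans; [apply le_meet_l |]; meet_proj
        | eapply le_trans; [apply le_meet_r |]; meet_proj ].
Ltac meet_solve := repeat apply meet_glb; meet_proj.

Section LOrderedFacts.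
Context {L : frame} {P : Type} (e : P -> P -> L).

Lemma is_supL_unique_top {D : P -> L} {s s' : P} :
  (forall x, e x x = top) -> is_supL e D s -> is_supL e D s' -> e s s' = top.
Proof. intros Hrefl Hs Hs'. rewrite (Hs s'), <- (Hs' s'). apply Hrefl. Qed.

Lemma kL_compact x y : compact e y -> kL e x y = e y x.
Proof.
  intros H. unfold kL. destruct excluded_middle_informative; [reflexivity | contradiction].
Qed.

Lemma kL_not_compact x y : ~ compact e y -> kL e x y = bot.
Proof.
  intros H. unfold kL. destruct excluded_middle_informative; [contradiction | reflexivity].
Qed.

Lemma kL_le x y : le (kL e x y) (e y x).
Proof.
  destruct (classic (compact e y)) as [Hy | Hy].
  - rewrite (kL_compact x y Hy). apply le_refl.
  - rewrite (kL_not_compact x y Hy). apply bot_le.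
Qed.
End LOrderedFacts.

Section Points.
Context {L : frame} {X : Type} {O : (X -> L) -> Prop}.

Notation P := (ptL O).
Notation e := (@sub_pt L X O).

Lemma sub_pt_mp (p q : P) A : le (meet (e p q) (proj1_sig p A)) (proj1_sig q A).
Proof. apply imp_elim, (Inf_lb (fun A => imp (proj1_sig p A) (proj1_sig q A)) A). Qed.

Lemma le_sub_pt (p q : P) c :
  (forall A, le (meet c (proj1_sig p A)) (proj1_sig q A)) -> le c (e p q).
Proof. intros H. apply Inf_greatest. intros A. apply imp_intro, H. Qed.

Lemma sub_pt_refl (p : P) : e p p = top.
Proof. apply top_le_eq, le_sub_pt. intros A. apply le_meet_r. Qed.

Lemma sub_pt_trans (p q r : P) : le (meet (e p q) (e q r)) (e p r).
Proof.
  apply le_sub_pt. intros A.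
  eapply le_trans; [| apply (sub_pt_mp q r)]. apply meet_glb; [meet_solve |].
  eapply le_trans; [| apply (sub_pt_mp p q)]. meet_solve.
Qed.

Lemma sub_pt_antisym (p q : P) : e p q = top -> e q p = top -> p = q.
Proof.
  intros Hpq Hqp. apply eq_sig_hprop; [intros; apply proof_irrelevance |].
  apply functional_extensionality. intros A.
  apply le_antisym; apply top_imp_le.
  - rewrite <- Hpq. apply (Inf_lb (fun A => imp (proj1_sig p A) (proj1_sig q A)) A).
  - rewrite <- Hqp. apply (Inf_lb (fun A => imp (proj1_sig q A) (proj1_sig p A)) A).
Qed.

Lemma sub_pt_L_ordered : L_ordered e.
Proof.
  constructor; [exact sub_pt_refl | exact sub_pt_trans | exact sub_pt_antisym].
Qed.

Lemma pt_mono (p : P) (A C : Opens O) :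
  (forall x, le (proj1_sig A x) (proj1_sig C x)) -> le (proj1_sig p A) (proj1_sig p C).
Proof.
  intros H. rewrite (pt_meet (proj2_sig p) (A := A) (B := C) (C := A)); [apply le_meet_r |].
  intros x. apply le_antisym; [apply meet_glb; [apply le_refl | apply H] | apply le_meet_l].
Qed.

Definition djoin_fun (D : P -> L) (A : Opens O) : L :=
  Sup (fun p : P => meet (D p) (proj1_sig p A)).

Section DirectedJoin.
Context {D : P -> L} (HD : directed e D).

Lemma djoin_meet (A C M : Opens O) :
  (forall x, proj1_sig M x = meet (proj1_sig A x) (proj1_sig C x)) ->
  djoin_fun D M = meet (djoin_fun D A) (djoin_fun D C).
Proof.
  intros HM. unfold djoin_fun. apply le_antisym.
  - apply Sup_least. intros p. rewrite (pt_meet (proj2_sig p) HM).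
    apply meet_glb; apply (le_Sup _ p); meet_solve.
  - apply meet_Sup_l_le. intros p. apply meet_Sup_r_le. intros q.
    eapply le_trans with (meet (meet (D p) (D q)) (meet (proj1_sig p A) (proj1_sig q C)));
      [meet_solve |].
    (* a common upper bound r of p and q receives both p A and q C *)
    eapply le_trans; [apply meet_mono; [apply (proj2 HD p q) | apply le_refl] |].
    apply meet_Sup_l_le. intros r. apply (le_Sup _ r).
    rewrite (pt_meet (proj2_sig r) HM).
    apply meet_glb; [meet_solve | apply meet_glb].
    + eapply le_trans; [| apply (sub_pt_mp p r)]. meet_solve.
    + eapply le_trans; [| apply (sub_pt_mp q r)]. meet_solve.
Qed.

Lemma djoin_is_point : is_point (djoin_fun D).
Proof.
  constructor.
  - exact djoin_meet.
  - intros I f C HC. unfold djoin_fun. apply le_antisym.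
    + apply Sup_least. intros p. rewrite (pt_join (proj2_sig p) HC).
      apply meet_Sup_r_le. intros i. apply (le_Sup _ i).
      apply (Sup_ub (fun p : P => meet (D p) (proj1_sig p (f i))) p).
    + apply Sup_least. intros i. apply Sup_least. intros p.
      apply (le_Sup _ p). apply meet_mono; [apply le_refl |].
      rewrite (pt_join (proj2_sig p) HC). apply (Sup_ub (fun i => proj1_sig p (f i)) i).
  - intros a C HC. unfold djoin_fun. apply le_antisym.
    + apply Sup_least. intros p. rewrite (pt_const (proj2_sig p) HC). apply le_meet_r.
    + eapply le_trans; [apply le_meet_top_l |]. rewrite <- (proj1 HD).
      apply meet_Sup_l_le. intros p. apply (le_Sup _ p).
      rewrite (pt_const (proj2_sig p) HC). apply le_refl.
Qed.

Definition djoin : P := exist _ (djoin_fun D) djoin_is_point.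

Lemma djoin_is_supL : is_supL e D djoin.
Proof.
  intros q. apply le_antisym.
  - apply le_subL. intros p. apply le_sub_pt. intros A.
    eapply le_trans; [| apply (sub_pt_mp djoin q)]. apply meet_glb; [meet_solve |].
    apply (le_Sup _ p). meet_solve.
  - apply le_sub_pt. intros A. apply meet_Sup_r_le. intros p.
    eapply le_trans; [| apply (sub_pt_mp p q)]. apply meet_glb; [| meet_solve].
    eapply le_trans; [| apply (subL_mp D (down e q) p)]. meet_solve.
Qed.
End DirectedJoin.

Lemma ptL_L_dcpo : L_dcpo e.
Proof.
  split; [exact sub_pt_L_ordered |].
  intros D HD. exists (djoin HD). apply djoin_is_supL.
Qed.

Lemma pt_le_of_is_supL {D : P -> L} {s s' : P} :
  is_supL e D s -> is_supL e D s' -> forall A, le (proj1_sig s A) (proj1_sig s' A).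
Proof.
  intros Hs Hs' A. eapply le_trans; [apply le_meet_top_l |].
  rewrite <- (is_supL_unique_top _ sub_pt_refl Hs Hs'). apply sub_pt_mp.
Qed.
End Points.

Section PrincipalPoints.
Context {L : frame} {X : Type} {O : (X -> L) -> Prop}.
Hypothesis HO : is_Ltopology O.

Notation P := (ptL O).
Notation e := (@sub_pt L X O).

Definition const_open (a : L) : Opens O := exist _ (fun _ => a) (top_const HO a).

Definition meet_open (A C : Opens O) : Opens O :=
  exist _ (fun x => meet (proj1_sig A x) (proj1_sig C x))
    (top_meet HO (proj2_sig A) (proj2_sig C)).

Lemma pt_meet_subL (q : P) (U A : Opens O) :
  le (meet (proj1_sig q U) (subL (proj1_sig U) (proj1_sig A))) (proj1_sig q A).
Proof.
  set (s := subL (proj1_sig U) (proj1_sig A)).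
  rewrite <- (pt_const (proj2_sig q) (a := s) (C := const_open s)) by reflexivity.
  rewrite <- (pt_meet (proj2_sig q) (A := U) (B := const_open s)
                (C := meet_open U (const_open s))) by reflexivity.
  apply pt_mono. intros x. cbn.
  eapply le_trans; [apply meet_comm_le | apply subL_mp].
Qed.

Section SuperCompactOpen.
Context {U : Opens O} (HU : super_compact O (proj1_sig U)).

Definition principal_fun (A : Opens O) : L := subL (proj1_sig U) (proj1_sig A).

Lemma principal_is_point : is_point principal_fun.
Proof.
  unfold principal_fun. constructor.
  - intros A C M HM. apply le_antisym.
    + apply meet_glb; apply subL_mono; intros x; rewrite HM; [apply le_meet_l | apply le_meet_r].
    + apply le_subL. intros x. rewrite HM. apply meet_glb.
      * eapply le_trans; [| apply (subL_mp (proj1_sig U) (proj1_sig A) x)]. meet_solve.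
      * eapply le_trans; [| apply (subL_mp (proj1_sig U) (proj1_sig C) x)]. meet_solve.
  - intros I f C HC.
    replace (proj1_sig C) with (fun x => Sup (fun i => proj1_sig (f i) x))
      by (symmetry; apply functional_extensionality, HC).
    apply (proj2 HU). intros i. exact (proj2_sig (f i)).
  - intros a C HC.
    replace (proj1_sig C) with (fun _ : X => a)
      by (symmetry; apply functional_extensionality, HC).
    apply le_antisym.
    + eapply le_trans; [apply le_meet_top_r |]. rewrite <- (proj1 HU).
      apply meet_Sup_r_le. intros x. apply subL_mp.
    + apply le_subL. intros x. apply le_meet_l.
Qed.

Definition principal_point : P := exist _ principal_fun principal_is_point.

Lemma sub_pt_principal (q : P) : e principal_point q = proj1_sig q U.
Proof.
  apply le_antisym.
  - eapply le_trans; [apply le_meet_top_r |].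
    eapply le_trans; [| apply (sub_pt_mp principal_point q U)].
    apply meet_mono; [apply le_refl |]. apply le_subL. intros x. apply le_meet_r.
  - apply le_sub_pt. intros A. apply pt_meet_subL.
Qed.

(* For an ideal [I] with join [s]: [e p_U s = s U = Sup_p (I p /\ e p_U p) <= I p_U]. *)
Lemma compact_principal : compact e principal_point.
Proof.
  apply top_le_eq, inf_greatest.
  intros a (I & s & [HIdir HIlow] & Hs & ->). apply imp_intro.
  eapply le_trans; [apply le_meet_r |]. rewrite sub_pt_principal.
  eapply le_trans; [apply (pt_le_of_is_supL Hs (djoin_is_supL HIdir) U) |].
  apply Sup_least. intros p. rewrite <- sub_pt_principal. apply HIlow.
Qed.
End SuperCompactOpen.
End PrincipalPoints.

Section Base.
Context {L : frame} {X : Type} {O : (X -> L) -> Prop} (HO : is_Ltopology O).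
Context {B : (X -> L) -> Prop} (HB : is_base O B) (HBsc : forall U, B U -> super_compact O U).

Notation P := (ptL O).
Notation e := (@sub_pt L X O).
Notation BT := {U : X -> L | B U}.

Definition base_open (W : BT) : Opens O := exist _ (proj1_sig W) (proj1 HB _ (proj2_sig W)).

Definition base_point (W : BT) : P := principal_point (U := base_open W) (HBsc _ (proj2_sig W)).

Lemma sub_pt_base_point (W : BT) (q : P) : e (base_point W) q = proj1_sig q (base_open W).
Proof. exact (sub_pt_principal HO _ q). Qed.

Lemma compact_base_point (W : BT) : compact e (base_point W).
Proof. exact (compact_principal HO _). Qed.

Lemma pt_base_decomp (q : P) (A : Opens O) :
  proj1_sig q A =
  Sup (fun W : BT => meet (subL (proj1_sig W) (proj1_sig A)) (proj1_sig q (base_open W))).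
Proof.
  rewrite (pt_join (proj2_sig q) (C := A)
             (f := fun W => meet_open HO (const_open HO (subL (proj1_sig W) (proj1_sig A)))
                              (base_open W))).
  - f_equal. apply functional_extensionality. intros W.
    set (s := subL (proj1_sig W) (proj1_sig A)).
    rewrite (pt_meet (proj2_sig q) (A := const_open HO s) (B := base_open W)) by reflexivity.
    rewrite (pt_const (proj2_sig q) (a := s)) by reflexivity.
    reflexivity.
  - intros x. exact (proj2 HB _ (proj2_sig A) x).
Qed.

Lemma pt_base_cover (q : P) : le top (Sup (fun W : BT => proj1_sig q (base_open W))).
Proof.
  rewrite <- (pt_const (proj2_sig q) (a := top) (C := const_open HO top)) by reflexivity.
  rewrite pt_base_decomp. apply Sup_least. intros W. apply (le_Sup _ W), le_meet_r.
Qed.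

Lemma is_supL_of_base_bounds (F : P -> L) (x : P) :
  (forall y, le (F y) (e y x)) ->
  (forall W, le (proj1_sig x (base_open W)) (F (base_point W))) ->
  is_supL e F x.
Proof.
  intros Hub Hbase z. apply le_antisym.
  - apply le_subL. intros y. eapply le_trans; [| apply (sub_pt_trans y x z)].
    apply meet_glb; [eapply le_trans; [apply le_meet_r | apply Hub] | apply le_meet_l].
  - apply le_sub_pt. intros A. rewrite (pt_base_decomp x A). apply meet_Sup_r_le. intros W.
    eapply le_trans; [| apply (pt_meet_subL HO z (base_open W) A)].
    apply meet_glb; [| meet_solve]. rewrite <- (sub_pt_base_point W z).
    eapply le_trans; [| apply (subL_mp F (down e z) (base_point W))].
    apply meet_glb; [meet_solve |]. eapply le_trans; [| apply Hbase]. meet_solve.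
Qed.

Definition base_ideal (x q : P) : L :=
  Sup (fun W : BT => meet (proj1_sig x (base_open W)) (e q (base_point W))).

Lemma le_base_ideal (x : P) (W : BT) :
  le (proj1_sig x (base_open W)) (base_ideal x (base_point W)).
Proof.
  apply (le_Sup _ W), meet_glb; [apply le_refl |]. rewrite sub_pt_refl. apply le_top.
Qed.

Lemma base_ideal_meet_le (x q1 q2 : P) :
  le (meet (base_ideal x q1) (base_ideal x q2))
     (Sup (fun W : BT => meet (proj1_sig x (base_open W))
                              (meet (e q1 (base_point W)) (e q2 (base_point W))))).
Proof.
  apply meet_Sup_l_le. intros U. apply meet_Sup_r_le. intros V.
  set (M := meet_open HO (base_open U) (base_open V)).
  apply le_trans with (meet (proj1_sig x M) (meet (e q1 (base_point U)) (e q2 (base_point V)))).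
  { rewrite (pt_meet (proj2_sig x) (C := M)) by reflexivity. meet_solve. }
  rewrite (pt_base_decomp x M). apply meet_Sup_l_le. intros W. apply (le_Sup _ W).
  apply meet_glb; [meet_solve | apply meet_glb].
  - eapply le_trans; [| apply (sub_pt_trans q1 (base_point U))].
    apply meet_glb; [meet_solve |]. rewrite sub_pt_base_point.
    eapply le_trans; [| apply (subL_mono _ (proj1_sig M)); intros; apply le_meet_l].
    meet_solve.
  - eapply le_trans; [| apply (sub_pt_trans q2 (base_point V))].
    apply meet_glb; [meet_solve |]. rewrite sub_pt_base_point.
    eapply le_trans; [| apply (subL_mono _ (proj1_sig M)); intros; apply le_meet_r].
    meet_solve.
Qed.

Lemma base_ideal_ideal (x : P) : ideal e (base_ideal x).
Proof.
  split; [split |].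
  - apply top_le_eq. eapply le_trans; [apply pt_base_cover |].
    apply Sup_least. intros W. apply (le_Sup _ (base_point W)), le_base_ideal.
  - intros q1 q2. eapply le_trans; [apply base_ideal_meet_le |].
    apply Sup_least. intros W. apply (le_Sup _ (base_point W)).
    apply meet_mono; [apply le_base_ideal | apply le_refl].
  - intros p q. apply meet_Sup_l_le. intros W. apply (le_Sup _ W).
    apply meet_glb; [meet_solve |]. eapply le_trans; [| apply (sub_pt_trans p q)].
    meet_solve.
Qed.

Lemma base_ideal_is_supL (x : P) : is_supL e (base_ideal x) x.
Proof.
  apply is_supL_of_base_bounds; [| apply le_base_ideal].
  intros y. apply Sup_least. intros W.
  eapply le_trans; [| apply (sub_pt_trans y (base_point W))].
  rewrite sub_pt_base_point. apply meet_comm_le.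
Qed.

Lemma kL_le_base_ideal (x y : P) : le (kL e x y) (base_ideal x y).
Proof.
  destruct (classic (compact e y)) as [Hy | Hy].
  - rewrite (kL_compact _ x y Hy). apply top_imp_le. rewrite <- Hy. apply inf_lb.
    exists (base_ideal x), x. auto using base_ideal_ideal, base_ideal_is_supL.
  - rewrite (kL_not_compact _ x y Hy). apply bot_le.
Qed.

Lemma kL_base_point (x : P) (W : BT) : kL e x (base_point W) = proj1_sig x (base_open W).
Proof. rewrite kL_compact by apply compact_base_point. apply sub_pt_base_point. Qed.

Lemma kL_directed (x : P) : directed e (kL e x).
Proof.
  split.
  - apply top_le_eq. eapply le_trans; [apply pt_base_cover |].
    apply Sup_least. intros W. rewrite <- kL_base_point. apply Sup_ub.
  - intros y1 y2. eapply le_trans; [apply meet_mono; apply kL_le_base_ideal |].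
    eapply le_trans; [apply base_ideal_meet_le |].
    apply Sup_least. intros W. apply (le_Sup _ (base_point W)).
    rewrite kL_base_point. apply le_refl.
Qed.

Lemma kL_is_supL (x : P) : is_supL e (kL e x) x.
Proof.
  apply is_supL_of_base_bounds; [apply kL_le |].
  intros W. rewrite kL_base_point. apply le_refl.
Qed.
End Base.

Theorem theorem5p7 (L : frame) (X : Type) (O : (X -> L) -> Prop)
  (HO : is_Ltopology O) (HX : strong_locally_super_compact O) :
  algebraic_L_dcpo (@sub_pt L X O).
Proof.
  destruct HX as [B [HB HBsc]].
  split; [exact ptL_L_dcpo |].
  intros x. split; [exact (kL_directed HO HB HBsc x) | exact (kL_is_supL HO HB HBsc x)].
Qed.
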